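(* Let $T$ be a spherically homogeneous rooted tree, $G\le\mathrm{Aut}~T$ a branch group, and $H\le G$ a subgroup with finitely many conjugates in $G$. Then $\mathrm{Supp}(H)$ is a clopen subset of $\partial T$.
   Context: A spherically homogeneous rooted tree is a rooted tree in which all vertices at the same distance from the root have the same degree; $\mathcal{L}_n$ is the set of vertices at distance $n$ from the root. $\partial T$ is the set of infinite paths from the root, topologized by the cone sets $C_v$ (paths through $v$). For $H\le\mathrm{Aut}~T$, $\mathrm{Supp}(H)=\{\gamma\in\partial T\mid \gamma^h\ne\gamma \text{ for some } h\in H\}$. For $G\le\mathrm{Aut}~T$, $\mathrm{rist}_G(v)$ is the set of elements of $G$ fixing $v$ whose support lies in $C_v$, and $\mathrm{Rist}_G(n)=\prod_{v\in\mathcal{L}_n}\mathrm{rist}_G(v)$. $G$ is a branch group if it acts transitively on every level $\mathcal{L}_n$ and $\mathrm{Rist}_G(n)$ has finite index in $G$ for all $n\ge1$. *)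

From mathcomp Require Import all_boot.
Set Implicit Arguments. Unset Strict Implicit. Unset Printing Implicit Defensive.

(* The spherically homogeneous rooted tree T_m with branching sequence m:
   every vertex at level n has exactly m n children.  Vertices are the finite
   words v = [:: i_0; ...; i_{n-1}] with i_k < m k; the root is [::];
   the children of v are rcons v i, i < m (size v). *)
Section Tree.
Variable m : nat -> nat.

Definition vert (v : seq nat) : Prop := forall i, i < size v -> nth 0 v i < m i.

Definition lvl (n : nat) (v : seq nat) : Prop := size v = n /\ vert v.

Fixpoint levelseq (n : nat) : seq (seq nat) :=
  if n is n'.+1 then
    flatten [seq [seq rcons v i | i <- iota 0 (m n')] | v <- levelseq n']
  else [:: [::]].

Definition adj (u v : seq nat) : Prop :=
  vert u /\ vert v /\ exists i, v = rcons u i \/ u = rcons v i.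

(* Aut T: graph automorphisms of the rooted tree fixing the root, extended
   by the identity outside the vertex set (so equality is Leibniz). *)
Definition is_aut (a : seq nat -> seq nat) : Prop :=
  [/\ forall v, vert v -> vert (a v),
      forall v, ~ vert v -> a v = v,
      bijective a,
      a [::] = [::] &
      forall u v, vert u -> vert v -> (adj u v <-> adj (a u) (a v))].

(* boundary dT : infinite paths from the root, i.e. sequences gamma with
   gamma k < m k; the path passes through the vertices pref gamma n. *)
Definition bpath (g : nat -> nat) : Prop := forall k, g k < m k.
Definition pref (g : nat -> nat) (n : nat) : seq nat := mkseq g n.

Definition cone (v : seq nat) (g : nat -> nat) : Prop :=
  bpath g /\ pref g (size v) = v.

Definition bact (a : seq nat -> seq nat) (g : nat -> nat) : nat -> nat :=
  fun k => nth 0 (a (pref g k.+1)) k.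

Definition Supp (H : (seq nat -> seq nat) -> Prop) (g : nat -> nat) : Prop :=
  bpath g /\ exists h, H h /\ bact h g <> g.

(* topology on dT generated by the cone sets: S (subset of dT) is open iff
   it is a union of cones, i.e. each point of S has a cone neighbourhood in S *)
Definition bopen (S : (nat -> nat) -> Prop) : Prop :=
  forall g, S g -> exists n, forall d, cone (pref g n) d -> S d.
Definition bclosed (S : (nat -> nat) -> Prop) : Prop :=
  bopen (fun g => bpath g /\ ~ S g).
Definition bclopen (S : (nat -> nat) -> Prop) : Prop :=
  (forall g, S g -> bpath g) /\ bopen S /\ bclosed S.

Definition is_group (G : (seq nat -> seq nat) -> Prop) : Prop :=
  [/\ forall g, G g -> is_aut g,
      G id,
      forall g h, G g -> G h -> G (g \o h) &
      forall g h, G g -> cancel g h -> cancel h g -> G h].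

Definition subgroup (H G : (seq nat -> seq nat) -> Prop) : Prop :=
  is_group H /\ forall h, H h -> G h.

Definition conjg_set (g : seq nat -> seq nat) (H : (seq nat -> seq nat) -> Prop)
  : (seq nat -> seq nat) -> Prop :=
  fun x => exists h gi, [/\ H h, cancel g gi, cancel gi g & x = g \o h \o gi].

Definition finitely_many_conjugates (H G : (seq nat -> seq nat) -> Prop) : Prop :=
  exists (n : nat) (F : nat -> (seq nat -> seq nat) -> Prop),
    forall g, G g -> exists2 i, i < n & conjg_set g H = F i.

Definition finite_index (K G : (seq nat -> seq nat) -> Prop) : Prop :=
  exists (n : nat) (r : nat -> seq nat -> seq nat),
    forall g, G g -> exists2 i, i < n & exists2 k, K k & g = r i \o k.

Definition rist (G : (seq nat -> seq nat) -> Prop) (v : seq nat)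
  (g : seq nat -> seq nat) : Prop :=
  [/\ G g, g v = v & forall d, Supp (eq g) d -> cone v d].

Definition Rist (G : (seq nat -> seq nat) -> Prop) (n : nat)
  (g : seq nat -> seq nat) : Prop :=
  exists f : seq nat -> seq nat -> seq nat,
    (forall v, v \in levelseq n -> rist G v (f v)) /\
    g = foldr (fun a b => a \o b) id (map f (levelseq n)).

Definition level_transitive (G : (seq nat -> seq nat) -> Prop) : Prop :=
  forall n u v, lvl n u -> lvl n v -> exists2 g, G g & g u = v.

Definition branch_group (G : (seq nat -> seq nat) -> Prop) : Prop :=
  [/\ is_group G, level_transitive G &
      forall n, 1 <= n -> finite_index (Rist G n) G].

End Tree.

From mathcomp Require Import all_boot.
From Stdlib Require Import Classical ClassicalEpsilon FunctionalExtensionality Lia.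
From mathcomp Require Import zify.
Set Implicit Arguments. Unset Strict Implicit. Unset Printing Implicit Defensive.

(* Supp(H) is open for any set of automorphisms.  Call two vertices
   equivalent when they lie in one orbit of the normaliser N_G(H); Supp(H) is
   N_G(H)-invariant.  As G is level-transitive and N_G(H) has index at most the
   number k of conjugates of H, every level splits into at most k classes.  If
   a point of the complement of Supp(H) had no cone neighbourhood inside the
   complement, the points of Supp(H) accumulating at it would produce k + 1
   pairwise inequivalent vertices on a single level.  Of the branch property
   only level transitivity is used. *)

Lemma pigeonhole k (P : nat -> nat -> Prop) :
  (forall j, j <= k -> exists2 i, i < k & P j i) ->
  exists j1 j2 i, [/\ j1 < j2 <= k, P j1 i & P j2 i].
Proof.
move=> hP.
have [f hf] : exists f : nat -> nat, forall j, j <= k -> f j < k /\ P j (f j).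
  apply: (choice (fun j i => j <= k -> i < k /\ P j i)) => j.
  case: (leqP j k) => [/hP [i ik Pji] | kj]; first by exists i.
  by exists 0 => jk; lia.
pose F (j : 'I_k.+1) : 'I_k := Ordinal (proj1 (hf j (ltn_ord j))).
have /injectivePn [j1 [j2 ne12 /(congr1 val) /= e12]] : ~~ injectiveb F.
  by apply/injectiveP => /leq_card; rewrite !card_ord ltnn.
wlog lt12 : j1 j2 {ne12} e12 / j1 < j2.
  move=> wlog; case: (ltngtP j1 j2) => [lt12 | lt21 | /val_inj eq12].
  - exact: wlog lt12.
  - exact: wlog (esym e12) lt21.
  - by rewrite eq12 eqxx in ne12.
exists j1, j2, (f j1); rewrite lt12 -ltnS ltn_ord; split=> //.
  exact: (hf _ (ltn_ord j1)).2.
by rewrite e12; exact: (hf _ (ltn_ord j2)).2.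
Qed.

Section TreeAutomorphisms.
Variable m : nat -> nat.

Lemma vert_rcons p j : vert m (rcons p j) -> vert m p.
Proof.
move=> hv i hi; move: (hv i); rewrite size_rcons nth_rcons hi; apply.
exact: ltnW.
Qed.

Lemma aut_size_rcons a : is_aut m a -> forall v, vert m v ->
  size (a v) = size v /\ forall p j, v = rcons p j -> exists j', a v = rcons (a p) j'.
Proof.
case=> _ _ abij aroot aadj.
elim/last_ind=> [|p j IH] vv.
  by rewrite aroot; split=> // p j /(congr1 size); rewrite size_rcons.
have vp := vert_rcons vv; have [sap childp] := IH vp.
have : adj m (a p) (a (rcons p j)).
  by apply/(aadj _ _ vp vv); split=> //; split=> //; exists j; left.
case=> _ [_ [i [-> | up]]].
  by rewrite !size_rcons sap; split=> // p' j' /rcons_inj [<- _]; exists i.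
exfalso; case/lastP: p vv vp sap childp {IH} up => [|q j0] _ _ _ childp.
  by rewrite aroot => /(congr1 size); rewrite size_rcons.
have [j1 ->] := childp q j0 erefl.
by case/rcons_inj => /(bij_inj abij)/(congr1 size); rewrite !size_rcons; lia.
Qed.

Lemma size_aut a v : is_aut m a -> vert m v -> size (a v) = size v.
Proof. by move=> au vv; case: (aut_size_rcons au vv). Qed.

Lemma aut_take a v L : is_aut m a -> vert m v -> a (take L v) = take L (a v).
Proof.
move=> au; elim/last_ind: v => [|p j IH] vv.
  by case: au => _ _ _ aroot _; rewrite aroot.
have [sv /(_ p j erefl) [j' av]] := aut_size_rcons au vv.
have vp := vert_rcons vv.
case: (leqP (size (rcons p j)) L) => hL; first by rewrite !take_oversize ?sv.
move: hL; rewrite size_rcons ltnS => hL.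
by rewrite av -!cats1 !takel_cat ?size_aut // IH.
Qed.

Lemma size_pref g n : size (pref g n) = n.
Proof. exact: size_mkseq. Qed.

Lemma nth_pref g n k : k < n -> nth 0 (pref g n) k = g k.
Proof. exact: nth_mkseq. Qed.

Lemma vert_pref g n : bpath m g -> vert m (pref g n).
Proof. by move=> bg i; rewrite size_pref => hi; rewrite nth_pref. Qed.

Lemma take_pref g L L' : L <= L' -> take L (pref g L') = pref g L.
Proof. by move=> h; rewrite /pref /mkseq -map_take take_iota (minn_idPl h). Qed.

Lemma pref_inj g d : (forall n, pref g n = pref d n) -> g = d.
Proof.
move=> h; apply: functional_extensionality => k.
by have := congr1 (nth 0 ^~ k) (h k.+1); rewrite !nth_pref.
Qed.

Lemma pref_bact a g n : is_aut m a -> bpath m g -> pref (bact a g) n = a (pref g n).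
Proof.
move=> au bg; have vg := @vert_pref g _ bg.
apply: (@eq_from_nth _ 0); first by rewrite size_pref size_aut ?size_pref.
move=> k; rewrite size_pref => hk; rewrite nth_pref //.
by rewrite /bact -(take_pref g hk) aut_take // nth_take.
Qed.

Lemma bpath_bact a g : is_aut m a -> bpath m g -> bpath m (bact a g).
Proof.
move=> au bg k; have := @vert_pref g k.+1 bg.
case: (au) => avert _ _ _ _ /avert/(_ k).
by rewrite -pref_bact // size_pref nth_pref //; apply.
Qed.

Lemma bact_id_pref h g : is_aut m h -> bpath m g ->
  bact h g = g <-> forall n, h (pref g n) = pref g n.
Proof.
move=> au bg; split=> [fixed n | fixed]; first by rewrite -pref_bact // fixed.
by apply: pref_inj => n; rewrite pref_bact.
Qed.

Lemma cone_pref_le d e L1 L2 : L1 <= L2 -> cone m (pref d L2) e -> cone m (pref d L1) e.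
Proof.
move=> hL [be]; rewrite !size_pref => ed; split=> //.
by rewrite size_pref -(take_pref e hL) ed take_pref.
Qed.

Lemma bopen_Supp H : bopen m (Supp m H).
Proof.
move=> g [bg [h [hH moved]]].
have [j hj] : exists j, bact h g j <> g j.
  apply: NNPP => fixed; apply: moved; apply: functional_extensionality => j.
  by apply: NNPP => hj; apply: fixed; exists j.
exists j.+1 => d [bd]; rewrite size_pref => pd.
split=> //; exists h; split=> // fixed; apply: hj.
have dj : d j = g j by have := congr1 (nth 0 ^~ j) pd; rewrite !nth_pref.
by rewrite -dj -[in RHS]fixed /bact pd.
Qed.

End TreeAutomorphisms.

Section Normaliser.
Variables (m : nat -> nat) (G H : (seq nat -> seq nat) -> Prop).
Hypotheses (groupG : is_group m G) (subHG : subgroup m H G).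

(* [x a = y b] with [x H x^-1 = y H y^-1]: the vertices [a] and [b] lie in one
   orbit of N_G(H), witnessed by [y^-1 x], written without inverses. *)
Definition conj_equiv (a b : seq nat) : Prop :=
  exists x y, [/\ G x, G y, x a = y b & conjg_set x H = conjg_set y H].

Lemma conj_equiv_sym a b : conj_equiv a b -> conj_equiv b a.
Proof. by case=> x [y [gx gy e c]]; exists y, x. Qed.

Lemma aut_of_G x : G x -> is_aut m x.
Proof. by case: groupG => autG _ _ _; apply: autG. Qed.

Lemma G_of_H h : H h -> G h.
Proof. by case: subHG => _; apply. Qed.

Lemma G_inverse y : G y -> exists yi, [/\ G yi, cancel y yi & cancel yi y].
Proof.
move=> gy; have [yi yK yiK] : bijective y by case: (aut_of_G gy).
by exists yi; split=> //; case: groupG => _ _ _ invG; exact: invG gy yK yiK.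
Qed.

Lemma conj_equiv_take f1 f2 L L' : bpath m f1 -> bpath m f2 -> L <= L' ->
  conj_equiv (pref f1 L') (pref f2 L') -> conj_equiv (pref f1 L) (pref f2 L).
Proof.
move=> b1 b2 hL [x [y [gx gy e c]]]; exists x, y; split=> //.
rewrite -(take_pref f1 hL) -(take_pref f2 hL).
rewrite (aut_take L (aut_of_G gx) (vert_pref b1)).
by rewrite (aut_take L (aut_of_G gy) (vert_pref b2)) e.
Qed.

Lemma Supp_normaliser x y yi g : G x -> G y -> G yi -> cancel y yi -> cancel yi y ->
  conjg_set x H = conjg_set y H -> bpath m g ->
  Supp m H (bact yi (bact x g)) -> Supp m H g.
Proof.
move=> gx gy gyi yK yiK c bg [bxg [h [hH moved]]]; split=> //.
have : conjg_set y H (y \o h \o yi) by exists h, yi.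
rewrite -c => -[h' [xi [hH' xK _ hh']]].
exists h'; split=> // fixed; apply: moved.
have [ax ayi] := (aut_of_G gx, aut_of_G gyi).
have ah := aut_of_G (G_of_H hH).
apply/(bact_id_pref ah (bpath_bact ayi (bpath_bact ax bg))) => n.
rewrite (pref_bact _ ayi (bpath_bact ax bg)) (pref_bact _ ax bg).
have h'fix := (bact_id_pref (aut_of_G (G_of_H hH')) bg).1 fixed n.
by have := congr1 (fun f => yi (f (x (pref g n)))) hh'; rewrite /= yK xK h'fix.
Qed.

Lemma Supp_conj_equiv g d L : bpath m g -> bpath m d ->
  conj_equiv (pref g L) (pref d L) ->
  (forall e, cone m (pref d L) e -> Supp m H e) -> Supp m H g.
Proof.
move=> bg bd [x [y [gx gy exy c]]] coneS.
have [yi [gyi yK yiK]] := G_inverse gy.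
have [ax ayi] := (aut_of_G gx, aut_of_G gyi).
apply: (Supp_normaliser gx gy gyi yK yiK c bg); apply: coneS; split.
  exact: bpath_bact ayi (bpath_bact ax bg).
by rewrite size_pref (pref_bact _ ayi (bpath_bact ax bg)) (pref_bact _ ax bg) exy yK.
Qed.

Lemma conj_equiv_pigeonhole k (C : nat -> (seq nat -> seq nat) -> Prop) :
  level_transitive m G ->
  (forall x, G x -> exists2 i, i < k & conjg_set x H = C i) ->
  forall L (v : nat -> seq nat), (forall j, j <= k -> lvl m L (v j)) ->
  exists j1 j2, j1 < j2 <= k /\ conj_equiv (v j1) (v j2).
Proof.
move=> trG conjC L v lv.
have := @pigeonhole k (fun j i => exists x, [/\ G x, x (v j) = v 0 & conjg_set x H = C i]).
case=> [j hj | j1 [j2 [i [lt12 [x1 [gx1 e1 c1]] [x2 [gx2 e2 c2]]]]]].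
  have [x gx exj] := trG L _ _ (lv j hj) (lv 0 (leq0n k)).
  by have [i ik cx] := conjC x gx; exists i => //; exists x.
by exists j1, j2; split=> //; exists x1, x2; rewrite e1 e2 c1 c2.
Qed.

Section NotInterior.
Variable g : nat -> nat.
Hypotheses (bg : bpath m g) (ng : ~ Supp m H g).
Hypothesis not_interior :
  ~ exists n, forall d, cone m (pref g n) d -> bpath m d /\ ~ Supp m H d.

Lemma near_inequivalent_point n : exists d N, [/\ bpath m d, pref d n = pref g n, n <= N &
  forall L, N <= L -> ~ conj_equiv (pref g L) (pref d L)].
Proof.
have [d [[bd]]] : exists d, cone m (pref g n) d /\ Supp m H d.
  apply: NNPP => none; apply: not_interior; exists n => d cd.
  by split=> [|Sd]; [case: cd | apply: none; exists d].
rewrite size_pref => pd /bopen_Supp [N coneS].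
exists d, (maxn N n); split=> // [|L hL equiv]; first exact: leq_maxr.
apply: ng; apply: (Supp_conj_equiv bg bd equiv) => e.
by move/(cone_pref_le (leq_trans (leq_maxl N n) hL)); exact: coneS.
Qed.

Lemma inequivalent_family j : exists L (F : nat -> nat -> nat),
  [/\ F 0 = g, forall i, i <= j -> bpath m (F i) &
      forall i1 i2, i1 < i2 <= j -> ~ conj_equiv (pref (F i1) L) (pref (F i2) L)].
Proof.
elim: j => [|j [L [F [F0 bF ineq]]]].
  by exists 0, (fun=> g); split=> // i1 [|i2] /andP[].
have [d [N [bd pd LN farN]]] := near_inequivalent_point L.
exists N, (fun i => if i == j.+1 then d else F i); split=> //.
  by move=> i hi; case: eqP => // ne; apply: bF; lia.
move=> i1 i2 /andP [lt12 le2]; have -> : (i1 == j.+1) = false by apply/eqP; lia.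
have bF1 : bpath m (F i1) by apply: bF; lia.
case: eqP => [_ | ne2] equiv.
  case: i1 lt12 bF1 equiv => [|i1] lt12 bF1 equiv.
    by rewrite F0 in equiv; exact: farN equiv.
  apply: (ineq 0 i1.+1); first lia.
  by rewrite F0 -pd; apply/conj_equiv_sym/(conj_equiv_take bF1 bd LN).
have bF2 : bpath m (F i2) by apply: bF; lia.
by apply: (ineq i1 i2); [lia | exact: conj_equiv_take bF1 bF2 LN equiv].
Qed.

End NotInterior.
End Normaliser.

Theorem proposition4p3 (m : nat -> nat) (G H : (seq nat -> seq nat) -> Prop) :
  branch_group m G ->
  subgroup m H G ->
  finitely_many_conjugates H G ->
  bclopen m (Supp m H).
Proof.
move=> [groupG trG _] subHG [k [C conjC]].
split; first by move=> g [].
split=> [|g [bg ng]]; first exact: bopen_Supp.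
apply: NNPP => not_interior.
have [L [F [_ bF ineq]]] := inequivalent_family groupG subHG bg ng not_interior k.
have level_F j : j <= k -> lvl m L (pref (F j) L).
  by move=> hj; split; [exact: size_pref | exact: vert_pref (bF j hj)].
have [j1 [j2 [lt12 equiv]]] := conj_equiv_pigeonhole trG conjC level_F.
exact: ineq lt12 equiv.
Qed.
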